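(* Let $n\ge 1$ and $d\ge 0$. For every polynomial $p\in\mathbb{R}[x]_d$, $x\in\mathbb{R}^n$, $$\|p\|_{\mathbb{R}[x]}\le 3^{d+1}\,\|p\|_{C([-1,1]^n)}.$$
   Context: $\mathbb{R}[x]_d$ is the space of real polynomials in $x\in\mathbb{R}^n$ of total degree at most $d$. For $p(x)=\sum_{|\alpha|\le d}\beta_\alpha x^\alpha$ (multi-indices $\alpha\in\mathbb{N}^n$, $|\alpha|=\sum_i\alpha_i$), $\|p\|_{\mathbb{R}[x]}:=\max_\alpha |\beta_\alpha|/\binom{|\alpha|}{\alpha}$ with $\binom{|\alpha|}{\alpha}=\frac{|\alpha|!}{\alpha_1!\cdots\alpha_n!}$. $\|p\|_{C(S)}=\max_{x\in S}|p(x)|$. *)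

From HB Require Import structures.
From mathcomp Require Import all_boot all_order all_algebra.
From mathcomp Require Import reals.
Set Implicit Arguments. Unset Strict Implicit. Unset Printing Implicit Defensive.
Import Order.TTheory GRing.Theory Num.Theory.
Local Open Scope ring_scope.

(* Multi-indices alpha in N^n with all entries <= d (enough for total degree <= d). *)
Definition midx (n d : nat) := {ffun 'I_n -> 'I_d.+1}.

Definition mdeg (n d : nat) (a : midx n d) : nat := (\sum_i (a i : nat))%N.

Definition multinom (R : realType) (n d : nat) (a : midx n d) : R :=
  ((mdeg a)`!)%:R / (\prod_i ((a i : nat)`!))%:R.

(* A polynomial p in R[x]_d, x in R^n, given by its coefficients beta_alpha, |alpha| <= d
   (coefficients at indices with |alpha| > d are ignored). *)
Definition peval (R : realType) (n d : nat) (beta : midx n d -> R) (x : 'I_n -> R) : R :=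
  \sum_(a : midx n d | (mdeg a <= d)%N) beta a * \prod_i x i ^+ (a i : nat).

Definition coef_norm (R : realType) (n d : nat) (beta : midx n d -> R) : R :=
  \big[Num.max/0]_(a : midx n d | (mdeg a <= d)%N) (`|beta a| / multinom R a).

From HB Require Import structures.
From mathcomp Require Import all_boot all_order all_algebra.
From mathcomp Require Import reals trigo.
From mathcomp Require Import ring lra zify.
Import Order.TTheory GRing.Theory Num.Theory.

(* Fix a multi-index [al] with [|al| <= d] and put [s := d - |al|].  The coefficient
   [beta al] is the value of a product functional: in the variable [x_i] apply a
   univariate rule [q |-> \sum_j w_j q(t_j)] with nodes in [-1, 1] that returns the
   [al_i]-th coefficient of every [q] of degree at most [al_i + s]; the tensor product
   of these rules applied to [p] is [beta al], hence
   [|beta al| <= M * \prod_i \sum_j |w_ij|].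
   The univariate rule extracting the [a]-th coefficient in degree [D = a (mod 2)] is
   V. Markov's: interpolate at the extremal points [cos (k pi / D)] of the Chebyshev
   polynomial [T_D], after reducing to the even (or odd) part by [x |-> -x].  The [i]-th coefficient of
   the [k]-th Lagrange polynomial at decreasing nonnegative nodes has sign
   [(-1)^(m + i + k)] and [T_D] alternates in sign on the nodes, so all terms of the
   interpolation formula for the [a]-th coefficient of [T_D] have the same sign:
   the total weight is the absolute value of that coefficient, at most [2^a 'C(D, a)].  Finally
   [\prod_i 2^(al_i) 'C(al_i + s, al_i) * \prod_i al_i! <= 3^d |al|!]. *)

Lemma ffactnD n p q : n ^_ (p + q) = n ^_ p * (n - p) ^_ q.
Proof.
elim: q => [|q IHq]; first by rewrite addn0 ffactn0 muln1.
by rewrite addnS !ffactnSr IHq subnDA mulnA.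
Qed.

Lemma leq_ffact n1 n2 m : n1 <= n2 -> n1 ^_ m <= n2 ^_ m.
Proof. by move=> le_n12; rewrite !ffact_prod; apply: leq_prod => i _; apply: leq_sub2r. Qed.

Lemma prod_ffact_leq (I : Type) (r : seq I) (a : I -> nat) (s : nat) :
  \prod_(i <- r) (a i + s) ^_ (a i) <= (\sum_(i <- r) a i + s) ^_ (\sum_(i <- r) a i).
Proof.
elim: r => [|x r IHr]; first by rewrite !big_nil.
rewrite !big_cons -addnA ffactnD addKn.
by rewrite leq_mul // leq_ffact // addnCA leq_addl.
Qed.

Lemma exp2_bin_leq j s : 2 ^ j * 'C(j + s, j) <= 3 ^ (j + s).
Proof.
rewrite -[3]/(1 + 2) expnDn (bigD1 (Ordinal (leq_addr s j : j < (j + s).+1))) //=.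
by rewrite exp1n mul1n mulnC leq_addr.
Qed.

Lemma prod_exp2_bin_fact_leq (I : finType) (a : I -> nat) (s : nat) :
  \prod_i (2 ^ a i * 'C(a i + s, a i)) * \prod_i (a i)`!
    <= 3 ^ (\sum_i a i + s) * (\sum_i a i)`!.
Proof.
rewrite -big_split /=.
under eq_bigr => i _ do rewrite -mulnA bin_ffact.
rewrite big_split /= -expn_sum.
apply: leq_trans (leq_mul (leqnn _) (prod_ffact_leq _ (index_enum I) a s)) _.
by rewrite -bin_ffact mulnA leq_mul2r exp2_bin_leq orbT.
Qed.

Local Open Scope ring_scope.

Lemma nat_ind2 (P : nat -> Prop) :
  P 0%N -> P 1%N -> (forall n, P n -> P n.+1 -> P n.+2) -> forall n, P n.
Proof.
move=> P0 P1 PSS n; suff : P n /\ P n.+1 by case.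
by elim: n => [|n [IHn IHSn]]; split => //; apply: PSS.
Qed.

Section Chebyshev.
Variable R : nzRingType.

Fixpoint cheb_pair (n : nat) : {poly R} * {poly R} :=
  if n is n'.+1 then let p := cheb_pair n' in (p.2, 'X * p.2 *+ 2 - p.1)
  else (1, 'X).

Definition cheb n := (cheb_pair n).1.

Lemma cheb0 : cheb 0 = 1. Proof. by []. Qed.
Lemma cheb1 : cheb 1 = 'X. Proof. by []. Qed.
Lemma chebSS n : cheb n.+2 = 'X * cheb n.+1 *+ 2 - cheb n. Proof. by []. Qed.

Lemma coef_cheb_odd n l : odd (n + l) -> (cheb n)`_l = 0.
Proof.
elim/nat_ind2: n l => [| |n IHn IHSn] l.
- by rewrite cheb0 coefC; case: l.
- by rewrite cheb1 coefX; case: l => [|[|l]].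
rewrite chebSS coefB coefMn coefXM; case: l => [|l] /=;
  rewrite !(addn0, addnS, addSn) /= ?negbK => odd_nl.
  by rewrite mul0rn IHn ?subr0 ?addn0.
by rewrite IHSn ?IHn ?mul0rn ?subr0 ?addnS ?addSn.
Qed.

End Chebyshev.

Lemma abs_coef_cheb_le (R : realDomainType) n l :
  `|(cheb R n)`_l| <= (2 ^ l * 'C(n, l))%:R.
Proof.
elim/nat_ind2: n l => [| |n IHn IHSn] l.
- by rewrite cheb0 coefC; case: l => [|l] /=; rewrite ?normr1 ?normr0.
- rewrite cheb1 coefX; case: l => [|[|l]] /=; rewrite ?normr0 ?normr1 //.
  by rewrite bin1 muln1 ler1n.
rewrite chebSS coefB coefMn coefXM; case: l => [|l] /=.
  by rewrite mul0rn sub0r normrN !bin0; apply: le_trans (IHn 0%N) _; rewrite bin0.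
have le_l := IHSn l.
have le_Sl : `|(cheb R n)`_l.+1| <= (2 ^ l.+1 * 'C(n.+1, l.+1))%:R.
  by apply: le_trans (IHn _) _; rewrite ler_nat leq_mul2l leq_bin2l ?orbT.
apply: le_trans (ler_normB _ _) _.
rewrite expnS -mulnA natrM in le_Sl.
rewrite normrMn binS mulnDr natrD !expnS -!mulnA !natrM.
lra.
Qed.

Lemma size_cheb_le (R : realDomainType) n : (size (cheb R n) <= n.+1)%N.
Proof.
apply/leq_sizeP => l lt_nl; apply/eqP; rewrite -normr_le0.
by apply: le_trans (abs_coef_cheb_le _ _ _) _; rewrite bin_small // muln0.
Qed.

Lemma horner_cheb_cos (R : realType) n (t : R) : (cheb R n).[cos t] = cos (t *+ n).
Proof.
elim/nat_ind2: n => [| |n IHn IHSn]; first by rewrite cheb0 hornerC cos0.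
  by rewrite cheb1 hornerX.
rewrite chebSS hornerD hornerN hornerMn hornerM hornerX IHn IHSn.
have -> : t *+ n = t *+ n.+1 - t by rewrite mulrSr addrK.
by rewrite cosB [t *+ n.+2]mulrSr cosD mulr2n; lra.
Qed.

Lemma cos_natmul_pi (R : realType) k : cos (pi *+ k) = (-1) ^+ k :> R.
Proof. by elim: k => [|k IHk]; rewrite ?cos0 // mulrS addrC cosDpi IHk exprS mulN1r. Qed.

Lemma horner_parity (R : comNzRingType) (p : {poly R}) (e : bool) (x : R) :
  (forall l, odd l != e -> p`_l = 0) ->
  p.[x] = x ^+ e * (if e then odd_poly p else even_poly p).[x ^+ 2].
Proof.
move=> p_par; rewrite -{1}(poly_even_odd p) hornerD hornerM hornerX !horner_comp hornerXn.
case: e p_par => p_par.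
  have -> : even_poly p = 0 by apply/polyP => j; rewrite coef_even_poly coef0 p_par ?odd_double.
  by rewrite horner0 add0r mulrC.
have -> : odd_poly p = 0.
  by apply/polyP => j; rewrite coef_odd_poly coef0 p_par //= odd_double.
by rewrite horner0 mul0r addr0 mul1r.
Qed.

Lemma coef_prod_XsubC_sign (R : numDomainType) (ps : seq R) i :
  (forall c, c \in ps -> 0 <= c) ->
  0 <= (-1) ^+ (size ps - i) * (\prod_(c <- ps) ('X - c%:P))`_i.
Proof.
move=> ps_ge0; have [le_i_ps|lt_ps_i] := leqP i (size ps); last first.
  by rewrite nth_default ?mulr0 // size_prod_XsubC.
rewrite coef_prod_XsubC // signrMK.
by apply: sumr_ge0 => I _; apply: prodr_ge0 => j _; apply/ps_ge0/mem_nth.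
Qed.

Section LagrangeSign.
Context {R : realFieldType} {n : nat} {x : nat -> R}.
Hypotheses (n_gt0 : (0 < n)%N) (x_decr : forall j k, (j < k)%N -> x k < x j)
  (x_ge0 : forall j, (j < n)%N -> 0 <= x j).

Local Notation lag k := (tnth (lagrange n x) k).

Let x_inj : injective x.
Proof.
move=> j k; case: (ltngtP j k) => [jk|kj|] // /eqP.
  by rewrite gt_eqF ?x_decr.
by rewrite lt_eqF ?x_decr.
Qed.

Lemma lagrange_denom_sign (k : 'I_n) :
  0 < (-1) ^+ k * \prod_(j < n | j != k) (x k - x j).
Proof.
have -> : (-1) ^+ k = \prod_(j < n | (j < k)%N) (-1 : R).
  rewrite -[in LHS](card_ord k) -prodr_const.
  by rewrite (big_ord_widen_cond n xpredT (fun _ => -1 : R)) // ltnW.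
rewrite [X in _ * X](bigID (fun j : 'I_n => (j < k)%N)) /= mulrA.
rewrite [X in _ * X * _](eq_bigl (fun j : 'I_n => (j < k)%N)); last first.
  by move=> j; apply: andb_idl; apply: contraTneq => ->; rewrite ltnn.
rewrite -big_split /=; apply: mulr_gt0; apply: prodr_gt0 => j.
  by rewrite mulN1r opprB subr_gt0 => /x_decr.
rewrite -leqNgt => /andP[j_neq_k le_kj].
by rewrite subr_gt0 x_decr // ltn_neqAle eq_sym j_neq_k.
Qed.

Lemma lagrange_coef_sign (k : 'I_n) i :
  0 <= (-1) ^+ (n.-1 - i + k) * (lag k)`_i.
Proof.
rewrite lagrangeE //= coefCM horner_prod.
under eq_bigr do rewrite hornerXsubC.
set p := \prod_(j < n | j != k) ('X - _).
have p_sign : 0 <= (-1) ^+ (n.-1 - i) * p`_i.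
  rewrite /p -big_filter -(big_map (fun j : 'I_n => x j) xpredT (fun c => 'X - c%:P)).
  have -> : n.-1 = size [seq x j | j : 'I_n <- index_enum 'I_n & j != k].
    by rewrite size_map -[n in LHS](card_ord n) -(cardC1 k) cardE /enum_mem.
  by apply: coef_prod_XsubC_sign => _ /mapP [j _ ->]; apply: x_ge0.
have denom_sign := lagrange_denom_sign k.
rewrite exprD [_^-1 * _]mulrC mulrACA; apply: mulr_ge0 => //.
by rewrite -invr_sign -invfM invr_ge0 ltW.
Qed.

Lemma sum_lagrange_coef_exp j i : (j < n)%N ->
  \sum_(k < n) x k ^+ j * (lag k)`_i = (j == i)%:R.
Proof.
move=> lt_jn; rewrite eq_sym -coefXn.
rewrite (lagrange_gen n_gt0 x_inj (_ : size 'X^j <= n)%N) ?size_polyXn //.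
by rewrite coef_sum; apply: eq_bigr => k _; rewrite coefCM hornerXn.
Qed.

Lemma sum_abs_lagrange_coef (S : {poly R}) i : (size S <= n)%N ->
  (forall k : 'I_n, 0 <= (-1) ^+ k * S.[x k]) ->
  \sum_(k < n) `|(lag k)`_i| * `|S.[x k]| = `|S`_i|.
Proof.
move=> size_S S_alt; set sgn : R := (-1) ^+ (n.-1 - i).
have abs_sgnM y : `|sgn * y| = `|y| by rewrite normrM normrX normrN1 expr1n mul1r.
have term_ge0 (k : 'I_n) : 0 <= sgn * (S.[x k] * (lag k)`_i).
  set L := (lag k)`_i; set sk : R := (-1) ^+ k.
  have -> : sgn * (S.[x k] * L) = (sk * S.[x k]) * ((-1) ^+ (n.-1 - i + k) * L).
    rewrite exprD -/sgn -/sk; transitivity (sk ^+ 2 * (sgn * (S.[x k] * L))).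
      by rewrite sqrr_sign mul1r.
    ring.
  by apply: mulr_ge0; [apply: S_alt | apply: lagrange_coef_sign].
have abs_term (k : 'I_n) :
    `|(lag k)`_i| * `|S.[x k]| = sgn * (S.[x k] * (lag k)`_i).
  by rewrite mulrC -normrM -abs_sgnM ger0_norm.
rewrite (eq_bigr _ (fun k _ => abs_term k)).
rewrite -mulr_sumr {2}(lagrange_gen n_gt0 x_inj size_S) coef_sum.
under [in RHS]eq_bigr do rewrite coefCM.
by rewrite -abs_sgnM ger0_norm // mulr_sumr sumr_ge0.
Qed.
End LagrangeSign.

Definition coef_rule {R : nzRingType} {J : finType} (t w : J -> R) (D a : nat) :=
  forall b, (b <= D)%N -> \sum_j w j * t j ^+ b = (b == a)%:R.

Lemma sum_pair_bool (V : nmodType) (J : finType) (F : J * bool -> V) :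
  \sum_p F p = \sum_j (F (j, true) + F (j, false)).
Proof.
rewrite (eq_bigr (fun p => F (p.1, p.2))) => [|[] //].
by rewrite -(pair_bigA _ (fun j s => F (j, s))); apply: eq_bigr => j _; rewrite big_bool.
Qed.

Section Symmetrization.
Context {R : numFieldType} {J : finType} (a : nat) (t w : J -> R).

Definition sym_nodes (p : J * bool) : R := if p.2 then t p.1 else - t p.1.
Definition sym_weights (p : J * bool) : R := w p.1 / 2 * (if p.2 then 1 else (-1) ^+ a).

Lemma coef_rule_sym D :
  (forall b, (b <= D)%N -> ~~ odd (a + b) -> \sum_j w j * t j ^+ b = (b == a)%:R) ->
  coef_rule sym_nodes sym_weights D a.
Proof.
move=> half_rule b le_bD; rewrite sum_pair_bool.
under eq_bigr do rewrite /sym_nodes /sym_weights /=.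
transitivity (\sum_j w j * t j ^+ b * ((1 + (-1) ^+ (a + b)) / 2)).
  by apply: eq_bigr => j _; rewrite [(- _) ^+ b]exprNn exprD; ring.
rewrite -mulr_suml -signr_odd; case: (boolP (odd (a + b))) => [odd_ab|even_ab].
  rewrite expr1 subrr mul0r mulr0; case: eqP odd_ab => // ->.
  by rewrite addnn odd_double.
by rewrite expr0 half_rule // -[1 + 1]/(2%:R) divff ?pnatr_eq0 ?mulr1.
Qed.

Lemma sum_abs_sym_weights : \sum_p `|sym_weights p| = \sum_j `|w j|.
Proof.
rewrite sum_pair_bool; apply: eq_bigr => j _; rewrite /sym_weights /=.
rewrite !normrM normrX normrN1 expr1n normr1 normfV (ger0_norm (ler0n _ 2)).
by field.
Qed.

End Symmetrization.

Lemma sum_ord_truncate [V : nmodType] [N n : nat] [F : nat -> V] :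
  (n <= N)%N -> (forall k, (n <= k)%N -> F k = 0) ->
  \sum_(k < N) F k = \sum_(k < n) F k.
Proof.
move=> le_nN F_eq0; rewrite (big_ord_widen N F le_nN) [RHS]big_mkcond /=.
by apply: eq_bigr => k _; case: ltnP => // /F_eq0.
Qed.

Section ChebyshevRule.
Variables (R : realType) (a h : nat).

Local Notation D := (a + h.*2)%N.
Local Notation m := (a./2 + h)%N.
Local Notation e := (odd a).

Lemma cheb_degreeE : D = (m.*2 + e)%N.
Proof. by have := odd_double_half a; lia. Qed.

Definition cheb_angle (k : nat) : R := pi *+ k / D%:R.
Definition cheb_node (k : nat) : R := cos (cheb_angle k).

Lemma cheb_angle_bounds [k] : (k <= m)%N -> 0 <= cheb_angle k <= pi / 2.
Proof.
move=> le_km; have pi_gt0 := pi_gt0 R; rewrite /cheb_angle.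
apply/andP; split; first by rewrite divr_ge0 // mulrn_wge0 // ltW.
have [D0|D_gt0] := posnP D; first by rewrite D0 invr0 mulr0 divr_ge0 ?ltW.
rewrite ler_pdivrMr ?ltr0n // -mulr_natr.
have : (k.*2)%:R <= D%:R :> R by rewrite ler_nat cheb_degreeE; lia.
rewrite -muln2 natrM; nra.
Qed.

Lemma cheb_node_ge0 [k] : (k <= m)%N -> 0 <= cheb_node k.
Proof.
move=> /cheb_angle_bounds /andP[angle_ge0 angle_le]; apply: cos_ge0_pihalf.
by rewrite angle_le andbT (le_trans _ angle_ge0) // oppr_le0 divr_ge0 ?ltW ?pi_gt0.
Qed.

Lemma cheb_node_decr [j k] : (j < k)%N -> (k <= m)%N -> cheb_node k < cheb_node j.
Proof.
move=> lt_jk le_km; have pi_gt0 := pi_gt0 R.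
have D_gt0 : (0 < D)%N by rewrite cheb_degreeE; lia.
have in_0pi l : (l <= m)%N -> cheb_angle l \in `[0, (pi : R)].
  move=> /cheb_angle_bounds /andP[ge0 le_pihalf]; rewrite in_itv /=; apply/andP; split => //.
  by apply: (le_trans le_pihalf); lra.
rewrite /cheb_node ltr_cos; last 2 first.
- exact: in_0pi (leq_trans (ltnW lt_jk) le_km).
- exact: in_0pi le_km.
rewrite /cheb_angle ltr_pM2r ?invr_gt0 ?ltr0n //.
by rewrite ltr_pMn2l.
Qed.

Lemma horner_cheb_node k : (k <= m)%N -> (cheb R D).[cheb_node k] = (-1) ^+ k.
Proof.
move=> le_km; rewrite horner_cheb_cos /cheb_angle.
have [D0|D_gt0] := posnP D.
  have -> : k = 0%N by move: le_km D0; rewrite cheb_degreeE; lia.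
  by rewrite D0 mulr0n cos0 expr0.
by rewrite -(mulr_natr (pi *+ k / D%:R)) divfK ?pnatr_eq0 -?lt0n // cos_natmul_pi.
Qed.

(* [lagrange] of [qpoly] needs nodes injective on all of [nat]; the values beyond [m]
   are padding that keeps the nodes decreasing. *)
Definition lagrange_node (k : nat) : R :=
  if (k <= m)%N then cheb_node k ^+ 2 else - k%:R.

Lemma lagrange_node_decr j k : (j < k)%N -> lagrange_node k < lagrange_node j.
Proof.
move=> lt_jk; rewrite /lagrange_node.
case: (leqP k m) => [le_km|lt_mk]; case: (leqP j m) => [le_jm|lt_mj].
- have := cheb_node_decr lt_jk le_km; have := cheb_node_ge0 le_km; nra.
- by have := leq_trans (ltn_trans lt_mj lt_jk) le_km; rewrite ltnn.
- by rewrite (lt_le_trans _ (sqr_ge0 _)) // oppr_lt0 ltr0n (leq_ltn_trans _ lt_mk).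
- by rewrite ltrN2 ltr_nat.
Qed.

Lemma lagrange_node_ge0 k : (k < m.+1)%N -> 0 <= lagrange_node k.
Proof. by rewrite /lagrange_node ltnS => ->; apply: sqr_ge0. Qed.

Definition cheb_sq_part : {poly R} :=
  if e then odd_poly (cheb R D) else even_poly (cheb R D).

Lemma coef_cheb_parity l : odd l != e -> (cheb R D)`_l = 0.
Proof.
move=> odd_l; apply: coef_cheb_odd.
by rewrite !oddD odd_double addbF; case: (odd a) (odd l) odd_l => [] [].
Qed.

Lemma horner_cheb_sq_part [k] : (k <= m)%N ->
  cheb_node k ^+ e * cheb_sq_part.[lagrange_node k] = (-1) ^+ k.
Proof.
move=> le_km; rewrite /lagrange_node le_km -horner_cheb_node //.
by rewrite (horner_parity _ _ _ _ coef_cheb_parity).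
Qed.

Lemma cheb_sq_part_alternating (k : 'I_m.+1) :
  0 <= (-1) ^+ k * cheb_sq_part.[lagrange_node k].
Proof.
have le_km : (k <= m)%N by rewrite -ltnS.
rewrite -horner_cheb_sq_part // -mulrA -expr2.
by apply: mulr_ge0; [apply/exprn_ge0/cheb_node_ge0 | apply: sqr_ge0].
Qed.

Lemma size_cheb_sq_part : (size cheb_sq_part <= m.+1)%N.
Proof.
have := size_cheb_le R D; rewrite /cheb_sq_part cheb_degreeE.
case: (odd a); rewrite ?addn1 ?addn0 => size_le.
  apply: leq_trans (size_odd_poly _) _.
  by rewrite leq_half_double (leq_trans size_le) // doubleS.
apply: leq_trans (size_even_poly _) _.
by rewrite leq_uphalf_double (leq_trans size_le) // doubleS.
Qed.

Lemma coef_cheb_sq_part : cheb_sq_part`_(a./2) = (cheb R D)`_a.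
Proof.
rewrite /cheb_sq_part; have := odd_double_half a.
by case: (odd a) => a_eq; rewrite ?coef_odd_poly ?coef_even_poly; congr (nth _ _ _); lia.
Qed.

Local Notation lag k := (tnth (lagrange m.+1 lagrange_node) k).

(* [(-1)^k * cheb_sq_part.[lagrange_node k]] is [cheb_node k ^- e], which turns the
   Lagrange rule in [y = x^2] into a rule for [x^a = x^e * y^(a./2)]. *)
Definition half_weight (k : nat) : R :=
  if (k < m.+1)%N then
    (-1) ^+ k * cheb_sq_part.[lagrange_node k] * (lag (inord k))`_(a./2)
  else 0.

Lemma half_weight_rule N b : (m < N)%N -> (b <= D.+1)%N -> ~~ odd (a + b) ->
  \sum_(k < N) half_weight k * cheb_node k ^+ b = (b == a)%:R.
Proof.
move=> lt_mN le_bD even_ab; set j := b./2.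
have b_eq : b = (j.*2 + e)%N.
  have odd_b : odd b = e by move: even_ab; rewrite oddD; case: (odd a) (odd b) => [] [].
  by rewrite -odd_b addnC odd_double_half.
have lt_jm : (j < m.+1)%N by move: le_bD; rewrite cheb_degreeE b_eq; lia.
rewrite (sum_ord_truncate (F := fun k => half_weight k * cheb_node k ^+ b) lt_mN);
  last by move=> k le_mk; rewrite /half_weight ltnNge le_mk mul0r.
transitivity (\sum_(k < m.+1) lagrange_node k ^+ j * (lag k)`_(a./2)).
  apply: eq_bigr => k _; have le_km : (k <= m)%N by rewrite -ltnS.
  have node_sq : lagrange_node k = cheb_node k ^+ 2 by rewrite /lagrange_node le_km.
  rewrite /half_weight ltn_ord inord_val [X in X ^+ j]node_sq.
  rewrite b_eq exprD -mul2n exprM.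
  transitivity ((-1) ^+ k * (cheb_node k ^+ e * cheb_sq_part.[lagrange_node k]) *
    (lag k)`_(a./2) * (cheb_node k ^+ 2) ^+ j); first by ring.
  by rewrite horner_cheb_sq_part // -expr2 sqrr_sign mul1r mulrC.
rewrite (sum_lagrange_coef_exp (ltn0Sn m) lagrange_node_decr) //; congr (_%:R).
by apply/eqP/eqP; move: b_eq (odd_double_half a); lia.
Qed.

Lemma sum_abs_half_weight N : (m < N)%N ->
  \sum_(k < N) `|half_weight k| <= (2 ^ a * 'C(D, a))%:R.
Proof.
move=> lt_mN; rewrite (sum_ord_truncate (F := fun k => `|half_weight k|) lt_mN); last first.
  by move=> k le_mk; rewrite /half_weight ltnNge le_mk normr0.
rewrite (eq_bigr (fun k : 'I_m.+1 =>
    `|(lag k)`_(a./2)| * `|cheb_sq_part.[lagrange_node k]|)); last first.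
  move=> k _; rewrite /half_weight ltn_ord inord_val !normrM normrX normrN1.
  by rewrite expr1n mul1r mulrC.
rewrite (sum_abs_lagrange_coef (ltn0Sn m) lagrange_node_decr lagrange_node_ge0
  cheb_sq_part (a./2) size_cheb_sq_part cheb_sq_part_alternating).
by rewrite coef_cheb_sq_part abs_coef_cheb_le.
Qed.

Lemma exists_cheb_rule N : (m < N)%N ->
  exists t w : 'I_N * bool -> R, [/\ forall p, `|t p| <= 1, coef_rule t w D.+1 a &
    \sum_p `|w p| <= (2 ^ a * 'C(D, a))%:R].
Proof.
move=> lt_mN; exists (sym_nodes (fun k : 'I_N => cheb_node k)).
exists (sym_weights a (fun k : 'I_N => half_weight k)); split.
- by case=> k [] /=; rewrite /sym_nodes /= ?normrN cos_max.
- by apply: coef_rule_sym => b; apply: half_weight_rule.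
- by rewrite sum_abs_sym_weights sum_abs_half_weight.
Qed.

End ChebyshevRule.

Lemma exists_coef_rule (R : realType) [a D N : nat] : (a <= D)%N -> (D < N)%N ->
  exists t w : 'I_N * bool -> R, [/\ forall p, `|t p| <= 1, coef_rule t w D a &
    \sum_p `|w p| <= (2 ^ a * 'C(D, a))%:R].
Proof.
move=> le_aD lt_DN; have := odd_double_half a; have := odd_double_half (D - a).
set h := (D - a)./2 => Dh_eq a_eq.
have [|t [w [t_le1 t_rule w_sum]]] := exists_cheb_rule R a h N; first lia.
exists t, w; split => // [b le_bD|]; first by apply: t_rule; lia.
apply: le_trans w_sum _; rewrite ler_nat leq_mul2l leq_bin2l ?orbT //; lia.
Qed.

Lemma exists_coord_small_diff [n d : nat] [al b : midx n d] :
  (mdeg b <= d)%N -> b != al ->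
  exists2 i, (b i != al i :> nat) & (b i <= al i + (d - mdeg al))%N.
Proof.
move=> le_bd /eqP b_neq; set s := (d - mdeg al)%N.
case: (pickP (fun i => (b i != al i :> nat) && (b i <= al i + s)%N)) => [i /andP[]|none].
  by exists i.
case: (pickP (fun i => b i != al i :> nat)) => [i1 b_neq1|b_eq]; last first.
  by case: b_neq; apply/ffunP => i; apply/val_inj/eqP/negbFE/b_eq.
have gt_i1 : (al i1 + s < b i1)%N by move: (none i1); rewrite /= b_neq1 /= ltnNge => ->.
have le_al_b i : (al i <= b i)%N.
  case: (eqVneq (b i : nat) (al i)) => [-> // | b_neqi].
  have := none i; rewrite /= b_neqi /= => /negbT; rewrite -ltnNge => /ltnW.
  exact: leq_trans (leq_addr _ _).
have : (mdeg al + s < mdeg b)%N.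
  rewrite /mdeg (bigD1 i1) //= [X in (_ < X)%N](bigD1 i1) //= addnAC -addSn.
  by apply: leq_add => //; apply: leq_sum => i _.
by rewrite /s; lia.
Qed.

Section TensorRule.
Context {R : realType} {n d : nat} (beta : midx n d -> R) {J : finType}.
Variables (t w : 'I_n -> J -> R).

Local Notation tensor_sum :=
  (\sum_(f : {ffun 'I_n -> J}) (\prod_i w i (f i)) * peval beta (fun i => t i (f i))).

Lemma tensor_sum_peval : tensor_sum =
  \sum_(b : midx n d | (mdeg b <= d)%N) beta b * \prod_i \sum_j w i j * t i j ^+ b i.
Proof.
rewrite /peval; under eq_bigr => f _ do rewrite mulr_sumr.
rewrite exchange_big /=; apply: eq_bigr => b _.
rewrite bigA_distr_bigA mulr_sumr; apply: eq_bigr => f _.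
by rewrite big_split /= mulrCA.
Qed.

Lemma tensor_sum_coef_rule [al : midx n d] : (mdeg al <= d)%N ->
  (forall i, coef_rule (t i) (w i) (al i + (d - mdeg al)) (al i)) ->
  tensor_sum = beta al.
Proof.
move=> le_al_d rule.
have moment b : (mdeg b <= d)%N -> \prod_i \sum_j w i j * t i j ^+ b i = (b == al)%:R.
  move=> le_bd; have [->|b_neq] := eqVneq b al.
    by rewrite big1 // => i _; rewrite rule ?leq_addr ?eqxx.
  have [i b_neqi le_bi] := exists_coord_small_diff le_bd b_neq.
  by rewrite (bigD1 i) //= rule // (negbTE b_neqi) mul0r.
rewrite tensor_sum_peval (bigD1 al) //= moment // eqxx mulr1 big1 ?addr0 //.
by move=> b /andP[le_bd b_neq]; rewrite moment // (negbTE b_neq) mulr0.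
Qed.

Lemma abs_tensor_sum_le [M : R] :
  (forall x : 'I_n -> R, (forall i, -1 <= x i <= 1) -> `|peval beta x| <= M) ->
  (forall i j, `|t i j| <= 1) ->
  `|tensor_sum| <= M * \prod_i \sum_j `|w i j|.
Proof.
move=> peval_le t_le1; apply: le_trans (ler_norm_sum _ _ _) _.
rewrite bigA_distr_bigA mulr_sumr; apply: ler_sum => f _.
rewrite normrM normr_prod mulrC ler_wpM2r ?prodr_ge0 //.
by apply: peval_le => i; rewrite -ler_norml.
Qed.

End TensorRule.

Section CoefBound.
Context {R : realType} {n d : nat} {beta : midx n d -> R} {M : R}.
Hypothesis peval_le :
  forall x : 'I_n -> R, (forall i, -1 <= x i <= 1) -> `|peval beta x| <= M.

Lemma cube_bound_ge0 : 0 <= M.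
Proof. by apply: le_trans (peval_le (fun _ => 0) _) => // i; rewrite lerN10 ler01. Qed.

Lemma abs_coef_le [al : midx n d] : (mdeg al <= d)%N ->
  `|beta al| <= M * (\prod_i (2 ^ al i * 'C(al i + (d - mdeg al), al i)))%N%:R.
Proof.
move=> le_al_d; set s := (d - mdeg al)%N.
have rule i : exists tw : ('I_d.+1 * bool -> R) * ('I_d.+1 * bool -> R),
    [/\ forall p, `|tw.1 p| <= 1, coef_rule tw.1 tw.2 (al i + s) (al i) &
      \sum_p `|tw.2 p| <= (2 ^ al i * 'C(al i + s, al i))%:R].
  have le_al_i : (al i <= mdeg al)%N by rewrite /mdeg (bigD1 i) //= leq_addr.
  have [|t [w tw_spec]] := exists_coef_rule R (N := d.+1) (leq_addr s (al i)).
    by rewrite ltnS /s; lia.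
  by exists (t, w).
have [tw tw_spec] := fin_all_exists rule.
rewrite -(tensor_sum_coef_rule beta (fun i => (tw i).1) (fun i => (tw i).2) le_al_d);
  last by move=> i; case: (tw_spec i).
have t_le1 i p : `|(tw i).1 p| <= 1 by case: (tw_spec i).
apply: le_trans (abs_tensor_sum_le beta _ (fun i => (tw i).2) peval_le t_le1) _.
rewrite ler_wpM2l ?cube_bound_ge0 // natr_prod; apply: ler_prod => i _.
by case: (tw_spec i) => _ _ ->; rewrite sumr_ge0.
Qed.

Lemma coef_div_multinom_le [al : midx n d] : (mdeg al <= d)%N ->
  `|beta al| / multinom R al <= 3 ^+ d * M.
Proof.
move=> le_al_d.
have := prod_exp2_bin_fact_leq _ (fun i => nat_of_ord (al i)) (d - mdeg al).
rewrite -/(mdeg al) subnKC // -(ler_nat R) => PQ_le.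
rewrite /multinom invf_div mulrA ler_pdivrMr ?ltr0n ?fact_gt0 //.
apply: le_trans (ler_wpM2r (ler0n _ _) (abs_coef_le le_al_d)) _.
rewrite -mulrA -natrM (le_trans (ler_wpM2l cube_bound_ge0 PQ_le)) //.
by rewrite natrM natrX mulrA [M * _]mulrC.
Qed.

End CoefBound.

Theorem lemma1 (R : realType) (n d : nat) (hn : (1 <= n)%N) (beta : midx n d -> R) (M : R) :
  (forall x : 'I_n -> R, (forall i, -1 <= x i <= 1) -> `|peval beta x| <= M) ->
  coef_norm beta <= 3 ^+ d.+1 * M.
Proof.
move=> peval_le; have M_ge0 := cube_bound_ge0 peval_le.
rewrite /coef_norm; apply: bigmax_le => [|al le_al_d]; first by rewrite mulr_ge0 ?exprn_ge0.
apply: le_trans (coef_div_multinom_le peval_le le_al_d) _.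
by rewrite exprS ler_wpM2r // ler_peMl ?exprn_ge0 ?ler1n.
Qed.
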